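(* Let $X,Y$ be compact metric spaces, and let $A\subseteq X$, $B\subseteq Y$ be closed subsets such that $A$ contains every isolated point of $X$ and $B$ contains every isolated point of $Y$. Let $I(X,A)$ and $I(Y,B)$ be constructed as described in the context (with arbitrary choices of the enumerations). Then every homeomorphism $g:X\to Y$ with $g[A]=B$ extends to a homeomorphism $I(X,A)\to I(Y,B)$. Conversely, if $f:I(X,A)\to I(Y,B)$ is a homeomorphism, then $f[X]=Y$ and $f[A]=B$.
   Context: For a compact metric space $X$ and a closed subset $A\subseteq X$ containing all isolated points of $X$, $I(X,A)\subseteq X\times[0,1]$ is defined as follows: let $(d_n)_{n\in\mathbb{N}}$ (with $\mathbb{N}=\{1,2,\dots\}$) enumerate, with each term repeated infinitely often, a countable dense subset of $A$; set $\widetilde{a}_n=(d_n,\tfrac1n)$ and $I(X,A)=(X\times\{0\})\cup\{\widetilde{a}_1,\widetilde{a}_2,\dots\}$. This is a compact subset of $X\times[0,1]$, and $X$ is identified with $X\times\{0\}$ (so that $f[X]$, $f[A]$ refer to these copies). $I(Y,B)$ is defined analogously from $Y,B$. *)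

From HB Require Import structures.
From mathcomp Require Import all_boot all_order all_algebra.
From mathcomp Require Import all_classical all_reals all_analysis.
Set Implicit Arguments. Unset Strict Implicit. Unset Printing Implicit Defensive.
Import Order.TTheory GRing.Theory Num.Theory.
Import numFieldNormedType.Exports.
Local Open Scope classical_set_scope.
Local Open Scope ring_scope.

(* An admissible enumeration of A: a sequence d (d 0, d 1, ... standing for
   d_1, d_2, ...) whose range is a countable dense subset of A and in which
   every term is repeated infinitely often. *)
Definition admissible_enum {T : topologicalType} (A : set T) (d : nat -> T) :=
  [/\ range d `<=` A,
      A `<=` closure (range d) &
      forall n N : nat, exists2 m : nat, (N <= m)%N & d m = d n].

(* I(X,A) as a subset of X * R (it lies in X * [0,1]):
   X * {0} together with the points (d_n, 1/n), n = 1, 2, ...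
   (with 0-based d : nat -> X, the n-th point is (d n, 1/(n+1))). *)
Definition Ispace {R : realType} {T : topologicalType} (d : nat -> T)
  : set (T * R) :=
  [set p | p.2 = 0] `|` range (fun n : nat => (d n, (n.+1%:R)^-1)).

Definition homeo_on {U V : topologicalType} (S : set U) (T : set V) (F : U -> V) :=
  exists G : V -> U,
    [/\ {within S, continuous F}, {within T, continuous G},
        F @` S `<=` T, G @` T `<=` S &
        (forall p, S p -> G (F p) = p) /\ (forall q, T q -> F (G q) = q)].

Definition homeomorphism {U V : topologicalType} (g : U -> V) :=
  continuous g /\ exists h : V -> U, [/\ continuous h, cancel g h & cancel h g].

From HB Require Import structures.
From mathcomp Require Import all_boot all_order all_algebra.
From mathcomp Require Import all_classical all_reals all_analysis.
From mathcomp Require Import lra.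
Import Order.TTheory GRing.Theory Num.Theory.
Import numFieldNormedType.Exports.
Local Open Scope classical_set_scope.
Local Open Scope ring_scope.

(* Matching the isolated points (dA n, 1/(n+1)) bijectively with the
   points (dB m, 1/(m+1)) so that the distance between g (dA n) and the matched
   dB m tends to 0, g extends by sending each isolated point to its partner:
   continuity at (x, 0) then follows from continuity of g, and the inverse is
   built the same way from g^-1.  Such a matching exists by a back-and-forth
   argument, because g[A] = B, the enumerations are dense in A and B, and every
   term is repeated infinitely often.

   In I(X,A) the points of X * {0} are exactly the limit points: a
   point (d_n, 1/(n+1)) is isolated, and a point x isolated in X lies in A and
   is thus approached by the points (d_n, 1/(n+1)).  Among them, A * {0} is the
   part lying in the closure of the isolated points, since A is closed and the
   d_n are dense in A.  Homeomorphisms preserve both descriptions. *)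

Lemma nat_seq_bounded (s : seq nat) : exists N, forall n, n \in s -> (n < N)%N.
Proof. by exists (\max_(i <- s) i).+1 => n ns; rewrite ltnS leq_bigmax_seq. Qed.

Lemma uniq_map_inj_in {T U : eqType} {f : T -> U} {s : seq T} :
  uniq (map f s) -> {in s &, injective f}.
Proof.
elim: s => //= x s IH /andP[fxNs us] y z; rewrite !inE.
move=> /predU1P[->|ys] /predU1P[->|zs] // fyz.
- by case/negP: fxNs; rewrite fyz map_f.
- by case/negP: fxNs; rewrite -fyz map_f.
- exact: IH.
Qed.

Section BackAndForth.
Context {P : nat -> nat -> nat -> Prop}.
Hypothesis forth : forall k n (K : seq nat), exists2 m, m \notin K & P k n m.
Hypothesis back : forall k m (K : seq nat), exists2 n, n \notin K & P k n m.
Hypothesis P_antimono : forall k k' n m, (k <= k')%N -> P k' n m -> P k n m.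

Let forth_pick k n (K : seq nat) := xget 0%N [set m | m \notin K /\ P k n m].
Let back_pick k m (K : seq nat) := xget 0%N [set n | n \notin K /\ P k n m].

Let forth_pickP k n K : forth_pick k n K \notin K /\ P k n (forth_pick k n K).
Proof.
have [m mK Pkm] := forth k n K.
by apply: (@xgetPex _ 0%N [set m | m \notin K /\ P k n m]); exists m.
Qed.

Let back_pickP k m K : back_pick k m K \notin K /\ P k (back_pick k m K) m.
Proof.
have [n nK Pkn] := back k m K.
by apply: (@xgetPex _ 0%N [set n | n \notin K /\ P k n m]); exists n.
Qed.

Definition forth_step k (s : seq (nat * nat)) :=
  if k \in unzip1 s then s else (k, forth_pick k k (unzip2 s)) :: s.

Definition back_step k (s : seq (nat * nat)) :=
  if k \in unzip2 s then s else (back_pick k k (unzip1 s), k) :: s.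

Fixpoint matching k :=
  if k is k'.+1 then back_step k' (forth_step k' (matching k')) else [::].

Lemma forth_stepE k s :
  exists2 t, forth_step k s = t ++ s & {in t, forall p, P k p.1 p.2}.
Proof.
rewrite /forth_step; case: ifP => _; first by exists [::].
by exists [:: (k, forth_pick k k (unzip2 s))] => // p /[1!inE] /eqP ->;
  exact: (forth_pickP _ _ _).2.
Qed.

Lemma back_stepE k s :
  exists2 t, back_step k s = t ++ s & {in t, forall p, P k p.1 p.2}.
Proof.
rewrite /back_step; case: ifP => _; first by exists [::].
by exists [:: (back_pick k k (unzip1 s), k)] => // p /[1!inE] /eqP ->;
  exact: (back_pickP _ _ _).2.
Qed.

Lemma forth_step_uniq k s : uniq (unzip1 s) -> uniq (unzip2 s) ->
  uniq (unzip1 (forth_step k s)) /\ uniq (unzip2 (forth_step k s)).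
Proof.
rewrite /forth_step; case: ifP => //= -> -> ->.
by rewrite (forth_pickP _ _ _).1.
Qed.

Lemma back_step_uniq k s : uniq (unzip1 s) -> uniq (unzip2 s) ->
  uniq (unzip1 (back_step k s)) /\ uniq (unzip2 (back_step k s)).
Proof.
rewrite /back_step; case: ifP => //= -> -> ->.
by rewrite (back_pickP _ _ _).1.
Qed.

Lemma matching_uniq k :
  uniq (unzip1 (matching k)) /\ uniq (unzip2 (matching k)).
Proof.
elim: k => [|k [u1 u2]] //=.
by have [] := forth_step_uniq k _ u1 u2; apply: back_step_uniq.
Qed.

Lemma mem_matching k :
  k \in unzip1 (matching k.+1) /\ k \in unzip2 (matching k.+1).
Proof.
have k_forth : k \in unzip1 (forth_step k (matching k)).
  by rewrite /forth_step; case: ifP => //= _; rewrite inE eqxx.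
by rewrite /= /back_step; case: ifP => //= _; rewrite !inE eqxx k_forth orbT.
Qed.

Lemma matchingE {k k'} : (k <= k')%N ->
  exists2 t, matching k' = t ++ matching k & {in t, forall p, P k p.1 p.2}.
Proof.
elim: k' => [|k' IH]; first by rewrite leqn0 => /eqP ->; exists [::].
rewrite leq_eqVlt => /predU1P[->|]; first by exists [::].
rewrite ltnS => kk' /=; have [t -> Pt] := IH kk'.
have [t1 -> Pt1] := forth_stepE k' (t ++ matching k).
have [t2 -> Pt2] := back_stepE k' (t1 ++ t ++ matching k).
exists (t2 ++ t1 ++ t); first by rewrite !catA.
move=> p; rewrite !mem_cat => /or3P[/Pt2|/Pt1|/Pt] //; exact: P_antimono.
Qed.

Lemma matching_sub {k k'} : (k <= k')%N -> {subset matching k <= matching k'}.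
Proof. by move=> /matchingE [t -> _] p; rewrite mem_cat orbC => ->. Qed.

Lemma matching_functional {k k' n m n' m'} :
  (n, m) \in matching k -> (n', m') \in matching k' -> (n == n') = (m == m').
Proof.
move=> /(matching_sub (leq_maxl k k')) nm /(matching_sub (leq_maxr k k')) nm'.
have [u1 u2] := matching_uniq (maxn k k').
apply/eqP/eqP => [n_n'|m_m'].
- by have [] := uniq_map_inj_in u1 _ _ nm nm' n_n'.
- by have [] := uniq_map_inj_in u2 _ _ nm nm' m_m'.
Qed.

Lemma matching_eventually k : exists N, forall k' n m,
  (n, m) \in matching k' -> (N <= maxn n m)%N -> P k n m.
Proof.
have [N ltN] := nat_seq_bounded (unzip1 (matching k) ++ unzip2 (matching k)).
exists N => k' n m nm Nnm; have [t Ek Pt] := matchingE (leq_maxl k k').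
have := matching_sub (leq_maxr k k') _ nm.
rewrite Ek mem_cat => /orP[/Pt //|nm_k].
have /ltN n_lt : n \in unzip1 (matching k) ++ unzip2 (matching k).
  by rewrite mem_cat (map_f fst nm_k).
have /ltN m_lt : m \in unzip1 (matching k) ++ unzip2 (matching k).
  by rewrite mem_cat (map_f snd nm_k) orbT.
by move: Nnm; rewrite leq_max leqNgt n_lt leqNgt m_lt.
Qed.

Lemma back_and_forth : exists sigma tau : nat -> nat,
  [/\ cancel sigma tau, cancel tau sigma &
      forall k, exists N, forall n, (N <= n)%N ->
        P k n (sigma n) /\ P k (tau n) n].
Proof.
pose sigma n := xget 0%N [set m | (n, m) \in matching n.+1].
pose tau m := xget 0%N [set n | (n, m) \in matching m.+1].
have sigmaP n : (n, sigma n) \in matching n.+1.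
  apply: (@xgetPex _ 0%N [set m | (n, m) \in matching n.+1]).
  have /mapP[[n' m] nm /= en] := (mem_matching n).1.
  by subst n'; exists m.
have tauP m : (tau m, m) \in matching m.+1.
  apply: (@xgetPex _ 0%N [set n | (n, m) \in matching m.+1]).
  have /mapP[[n m'] nm /= em] := (mem_matching m).2.
  by subst m'; exists n.
exists sigma, tau; split.
- move=> n; apply/eqP.
  by rewrite (matching_functional (tauP (sigma n)) (sigmaP n)).
- move=> m; apply/eqP.
  by rewrite -(matching_functional (sigmaP (tau m)) (tauP m)).
- move=> k; have [N PN] := matching_eventually k; exists N => n Nn.
  by split; [apply: PN (sigmaP n) _ | apply: PN (tauP n) _];
    rewrite leq_max Nn ?orbT.
Qed.

End BackAndForth.

Section InverseSuccessor.
Context {R : realType}.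

Lemma invS_gt0 n : 0 < n.+1%:R^-1 :> R.
Proof. by rewrite invr_gt0 ltr0n. Qed.

Lemma ltr_invS n m : (n.+1%:R^-1 < m.+1%:R^-1 :> R) = (m < n)%N.
Proof. by rewrite ltf_pV2 ?posrE ?ltr0n // ltr_nat ltnS. Qed.

Lemma invS_lt {e : R} : 0 < e ->
  exists N, forall n, (N <= n)%N -> n.+1%:R^-1 < e.
Proof.
move=> e0; exists (Num.truncn e^-1) => n Nn.
rewrite invf_plt ?posrE ?ltr0n //.
by apply: lt_le_trans (truncnS_gt _) _; rewrite ler_nat ltnS.
Qed.

Lemma ball0_invS (e : R) n :
  ball (0 : R) e (n.+1%:R^-1 : R) = (n.+1%:R^-1 < e).
Proof. by rewrite -ball_normE /= sub0r normrN gtr0_norm ?invS_gt0. Qed.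

Definition invS_idx (r : R) : nat := (Num.truncn r^-1).-1.

Lemma invS_idxK n : invS_idx n.+1%:R^-1 = n.
Proof.
by rewrite /invS_idx invrK (@truncn_def _ _ n.+1) // lexx ltr_nat ltnSn.
Qed.

End InverseSuccessor.

Lemma cancel_eventually_ge (sigma tau : nat -> nat) : cancel sigma tau ->
  forall M, exists N, forall n, (N <= n)%N -> (M <= sigma n)%N.
Proof.
move=> sK M; have [N ltN] := nat_seq_bounded (map tau (iota 0 M)).
exists N => n Nn; rewrite leqNgt; apply/negP => sM.
have : n \in map tau (iota 0 M) by rewrite -[n]sK map_f // mem_iota add0n sM.
by move/ltN; rewrite ltnNge Nn.
Qed.

Section Tracking.
Context {R : realType}.

Definition tracks {T U : pseudoMetricType R} (d : nat -> T) (e : nat -> U)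
    (g : T -> U) (sigma : nat -> nat) :=
  forall eps, 0 < eps ->
    exists N, forall n, (N <= n)%N -> ball (g (d n)) eps (e (sigma n)).

Lemma admissible_enum_approx {T U : pseudoMetricType R} {B : set T}
    {e : nat -> T} {h : T -> U} {b : T} {eps : R} (K : seq nat) :
  admissible_enum B e -> continuous h -> B b -> 0 < eps ->
  exists2 m, m \notin K & ball b eps (e m) /\ ball (h b) eps (h (e m)).
Proof.
move=> [_ dense repeat] ch Bb eps0.
have near_b : nbhs b (ball b eps `&` h @^-1` ball (h b) eps).
  apply: filterI; first exact: nbhsx_ballx.
  exact: ch _ _ (nbhsx_ballx (h b) _ eps0).
have [_ [[m0 _ <-] bm0]] := dense b Bb _ near_b.
have [N ltN] := nat_seq_bounded K; have [m Nm em] := repeat m0 N.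
exists m; last by rewrite em.
by apply: contraTN Nm => /ltN; rewrite ltnNge.
Qed.

Lemma tracking_bijection {X Y : pseudoMetricType R} {A : set X} {B : set Y}
    {dA : nat -> X} {dB : nat -> Y} {g : X -> Y} {h : Y -> X} :
  continuous g -> continuous h -> cancel g h -> cancel h g -> g @` A = B ->
  admissible_enum A dA -> admissible_enum B dB ->
  exists sigma tau, [/\ cancel sigma tau, cancel tau sigma,
    tracks dA dB g sigma & tracks dB dA h tau].
Proof.
move=> cg ch gK hK gA admA admB.
pose P k n m := ball (g (dA n)) (k.+1%:R^-1 : R) (dB m) /\
                ball (h (dB m)) (k.+1%:R^-1 : R) (dA n).
have [A_dA _ _] := admA; have [B_dB _ _] := admB.
have forth k n (K : seq nat) : exists2 m, m \notin K & P k n m.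
  have Bb : B (g (dA n)).
    by rewrite -gA; exists (dA n) => //; apply: A_dA; exists n.
  have [m mK [bm hbm]] := admissible_enum_approx K admB ch Bb (invS_gt0 k).
  by exists m => //; split => //; apply: ball_sym; rewrite gK in hbm.
have back k m (K : seq nat) : exists2 n, n \notin K & P k n m.
  have Aa : A (h (dB m)).
    have [a Aa <-] : (g @` A) (dB m) by rewrite gA; apply: B_dB; exists m.
    by rewrite gK.
  have [n nK [an gan]] := admissible_enum_approx K admA cg Aa (invS_gt0 k).
  by exists n => //; split => //; apply: ball_sym; rewrite hK in gan.
have antimono k k' n m : (k <= k')%N -> P k' n m -> P k n m.
  move=> kk' [gnm hmn]; have le : (k'.+1%:R^-1 : R) <= k.+1%:R^-1.
    by rewrite lef_pV2 ?posrE ?ltr0n // ler_nat ltnS.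
  by split; apply: (le_ball le).
have [sigma [tau [sK tK evP]]] := back_and_forth forth back antimono.
exists sigma, tau; split => // eps eps0; have [k ltk] := invS_lt eps0;
  have [N PN] := evP k; exists N => n Nn;
  apply: (le_ball (ltW (ltk k (leqnn k)))).
- exact: (PN n Nn).1.1.
- exact: (PN n Nn).2.2.
Qed.

End Tracking.

Definition Ipoint {R : realType} {T : Type} (d : nat -> T) (n : nat) : T * R :=
  (d n, n.+1%:R^-1).

Section IspaceTopology.
Context {R : realType} {X : metricType R} {d : nat -> X}.
Local Notation S := (Ispace (R:=R) d).
Local Notation pt := (Ipoint (R:=R) d).

Lemma Ispace_cases {q} : S q -> q.2 = 0 \/ exists n, q = pt n.
Proof. by case=> [|[n _ <-]]; [left|right; exists n]. Qed.

Lemma near_neq {a p : X * R} : a != p -> \forall q \near p, q != a.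
Proof.
move=> ap; have [a1p1|a1p1] := eqVneq a.1 p.1.
- have a2p2 : a.2 != p.2.
    apply: contraNneq ap => a2p2.
    by rewrite [a]surjective_pairing a1p1 a2p2 -surjective_pairing.
  have e0 : 0 < `|p.2 - a.2| by rewrite normr_gt0 subr_eq0 eq_sym.
  by apply: filterS (nbhsx_ballx p _ e0) => q [_ pq]; apply: contraTneq pq => ->;
    rewrite ltxx.
- have e0 : 0 < mdist p.1 a.1 by rewrite mdist_gt0 eq_sym.
  apply: filterS (nbhsx_ballx p _ e0) => q [pq _]; apply/eqP => qa.
  by move: pq; rewrite qa ballEmdist /= ltxx.
Qed.

Lemma Ispace_isolated {p} : p.2 != 0 -> \forall q \near p, S q -> q = p.
Proof.
move=> p2; have e0 : 0 < `|p.2| / 2 by rewrite divr_gt0 ?normr_gt0.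
have [N ltN] := invS_lt e0.
(* Only the pt i with i < N have |q.2| >= |p.2| / 2, and those other than p
   are avoided near p. *)
have near_pt (i : 'I_N) : \forall q \near p, pt i = p \/ q != pt i.
  have [->|ip] := eqVneq (pt i) p; first by apply: filterE => q; left.
  by apply: filterS (near_neq ip) => q; right.
apply: filterS2 (filter_forall _ near_pt) (nbhsx_ballx p _ e0).
move=> q others [_ pq] /Ispace_cases.
have small : `|q.2| < `|p.2| / 2 -> False.
  move: pq; rewrite -ball_normE /= => pq q2.
  by have := ler_normD (p.2 - q.2) q.2; rewrite subrK; lra.
case=> [q0|[n qn]]; first by case: small; rewrite q0 normr0.
have [nN|Nn] := ltnP n N.
  by case: (others (Ordinal nN)) => /= [<-//|]; rewrite qn eqxx.
by case: small; rewrite qn /= gtr0_norm ?invS_gt0 // ltN.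
Qed.

Lemma limit_point_Ispace {p} : limit_point S p -> p.2 = 0.
Proof.
move=> Lp; apply: contrapT => /eqP p2.
by have [q [/eqP qp Sq /(_ Sq)]] := Lp _ (Ispace_isolated p2).
Qed.

Lemma Ipoint_index_large N (x : X) : \forall q \near (x, 0 : R),
  forall n, q = pt n -> (N < n)%N.
Proof.
apply: filterS (nbhsx_ballx (x, 0 : R) _ (@invS_gt0 R N)) => q [_ xq] n qn.
by move: xq; rewrite qn /= ball0_invS ltr_invS.
Qed.

Section Base.
Context {A : set X}.
Hypothesis admA : admissible_enum A d.

Lemma base_in_closure_Ipoints {x} : A x -> closure (range pt) (x, 0).
Proof.
move=> Ax U /nbhs_ballP[e e0 Ue]; case: admA => _ dense repeat.
have [_ [[n0 _ <-] xn0]] := dense x Ax _ (nbhsx_ballx x _ e0).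
have [N ltN] := invS_lt e0; have [m Nm dm] := repeat n0 N.
exists (pt m); split; first by exists m.
by apply: Ue; split; rewrite /= ?dm // ball0_invS ltN.
Qed.

Lemma closure_Ipoints_in_base {x} :
  closed A -> closure (range pt) (x, 0) -> A x.
Proof.
move=> clA clx; apply: clA => V /nbhs_ballP[e e0 Ve]; case: admA => dA _ _.
have [_ [[n _ <-] [xn _]]] := clx _ (nbhsx_ballx (x, 0 : R) _ e0).
by exists (d n); split; [apply: dA; exists n | exact: Ve].
Qed.

Hypothesis isoA : isolated [set: X] `<=` A.

Lemma limit_point_Ispace0 {p} : p.2 = 0 -> limit_point S p.
Proof.
case: p => x r /= ->{r} U Ux.
have [Lx|nLx] := pselect (limit_point [set: X] x).
  have /nbhs_ballP[e e0 Ue] := Ux.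
  have [y [yx _ xy]] := Lx _ (nbhsx_ballx x _ e0).
  exists (y, 0); split; [by apply: contra yx => /eqP[->] | by left |].
  by apply: Ue; split => //=; apply: ballxx.
have Ax : A x.
  apply: isoA; split; first exact: in_setT.
  have [V Vx sV] : exists2 V, nbhs x V & [set: X] `&` V `<=` [set x].
    by rewrite -not_limit_pointE.
  exists V => //; rewrite setIT; apply/seteqP; split => [y Vy|y ->].
    exact: sV.
  exact: nbhs_singleton.
have [_ [[n _ <-] Un]] := base_in_closure_Ipoints Ax _ Ux.
exists (pt n); split => //; last by right; exists n.
by rewrite xpair_eqE negb_and orbC gt_eqF ?invS_gt0.
Qed.

End Base.
End IspaceTopology.

Section IspaceMap.
Context {R : realType} {X Y : metricType R} {dX : nat -> X} (dY : nat -> Y).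
Local Notation SX := (Ispace (R:=R) dX).
Local Notation SY := (Ispace (R:=R) dY).

Definition Ispace_map (g : X -> Y) (sigma : nat -> nat) (p : X * R) : Y * R :=
  if p.2 == 0 then (g p.1, 0) else Ipoint dY (sigma (invS_idx p.2)).

Lemma Ispace_map0 g sigma x : Ispace_map g sigma (x, 0) = (g x, 0).
Proof. by rewrite /Ispace_map eqxx. Qed.

Lemma Ispace_map_Ipoint g sigma n :
  Ispace_map g sigma (Ipoint dX n) = Ipoint dY (sigma n).
Proof. by rewrite /Ispace_map /= gt_eqF ?invS_gt0 ?invS_idxK. Qed.

Lemma Ispace_map_sub g sigma : Ispace_map g sigma @` SX `<=` SY.
Proof.
move=> _ [p /Ispace_cases[p0|[n ->]] <-].
  by case: p p0 => x r /= ->; rewrite Ispace_map0; left.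
by rewrite Ispace_map_Ipoint; right.
Qed.

Lemma Ispace_map_continuous g sigma : continuous g ->
  (forall M, exists N, forall n, (N <= n)%N -> (M <= sigma n)%N) ->
  tracks dX dY g sigma -> {within SX, continuous (Ispace_map g sigma)}.
Proof.
move=> cg sigma_large g_sigma; apply/subspace_continuousP => -[x r] _ W.
rewrite /from_subspace; have [r0|r0] := eqVneq r 0; last first.
  move=> /nbhs_singleton Wp.
  apply: (filterS _ (Ispace_isolated (d := dX) (p := (x, r)) r0)) => q qp Sq.
  by rewrite /= (qp Sq).
rewrite r0 Ispace_map0 => /nbhs_ballP[e e0 We].
have e2 : 0 < e / 2 by rewrite divr_gt0.
have /nbhs_ballP[d d0 gd] := cg x _ (nbhsx_ballx (g x) _ e2).
have [N1 ltN1] := g_sigma _ e2; have [M ltM] := invS_lt e0.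
have [N2 leN2] := sigma_large M.
apply: (filterS2 _ _ (Ipoint_index_large (d := dX) (maxn N1 N2) x)
  (nbhsx_ballx (x, 0 : R) _ d0)).
move=> q large [/= xq _] /Ispace_cases[q0|[n qn]].
  rewrite [q]surjective_pairing q0 Ispace_map0; apply: We; split => /=.
    by apply: le_ball (gd _ xq); lra.
  exact: ballxx.
have /ltnW := large n qn; rewrite geq_max => /andP[N1n N2n].
rewrite qn Ispace_map_Ipoint; apply: We; split => /=.
  rewrite (splitr e); apply: (@ball_triangle _ _ (g (dX n))); last exact: ltN1.
  by apply: gd; move: xq; rewrite qn.
by rewrite ball0_invS ltM // leN2.
Qed.

End IspaceMap.

Lemma Ispace_mapK {R : realType} {X Y : metricType R} {dX : nat -> X}
    {dY : nat -> Y} {g : X -> Y} {h : Y -> X} {sigma tau : nat -> nat} :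
  cancel g h -> cancel sigma tau -> forall p, Ispace (R:=R) dX p ->
  Ispace_map dX h tau (Ispace_map dY g sigma p) = p.
Proof.
move=> gK sK p /Ispace_cases[p0|[n ->]]; last by rewrite !Ispace_map_Ipoint sK.
by case: p p0 => x r /= ->; rewrite !Ispace_map0 gK.
Qed.

Lemma Ispace_map_homeo_on {R : realType} {X Y : metricType R} {dX : nat -> X}
    {dY : nat -> Y} {g : X -> Y} {h : Y -> X} {sigma tau : nat -> nat} :
  continuous g -> continuous h -> cancel g h -> cancel h g ->
  cancel sigma tau -> cancel tau sigma ->
  tracks dX dY g sigma -> tracks dY dX h tau ->
  homeo_on (Ispace (R:=R) dX) (Ispace (R:=R) dY) (Ispace_map dY g sigma).
Proof.
move=> cg ch gK hK sK tK g_sigma h_tau; exists (Ispace_map dX h tau); split.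
- by apply: Ispace_map_continuous => //; apply: cancel_eventually_ge sK.
- by apply: Ispace_map_continuous => //; apply: cancel_eventually_ge tK.
- exact: Ispace_map_sub.
- exact: Ispace_map_sub.
- by split; [exact: Ispace_mapK gK sK | exact: Ispace_mapK hK tK].
Qed.

Section WithinContinuous.
Context {T U : topologicalType} {S : set T} {F : T -> U}.
Hypothesis cF : {within S, continuous F}.

Lemma within_continuous_closure {E : set T} {p} :
  E `<=` S -> S p -> closure E p -> closure (F @` E) (F p).
Proof.
move=> ES Sp clE W /((subspace_continuousP S F).1 cF p Sp) /clE[q [Eq Wq]].
by exists (F q); split; [exists q | apply: Wq; apply: ES].
Qed.

Lemma within_continuous_limit_point {T' : set U} {G : U -> T} {p} :
  F @` S `<=` T' -> (forall q, S q -> G (F q) = q) ->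
  S p -> limit_point S p -> limit_point T' (F p).
Proof.
move=> FS GF Sp Lp.
have : closure (S `\ p) p.
  by move=> W /Lp[q [/eqP qp Sq Wq]]; exists q.
move=> /(within_continuous_closure (@subDsetl _ _ _) Sp) clF W /clF.
move=> [_ [[q [Sq /= qp] <-] Wq]]; exists (F q); split => //.
- by apply/eqP => Fqp; apply: qp; rewrite -(GF q Sq) Fqp GF.
- by apply: FS; exists q.
Qed.

End WithinContinuous.

Lemma image_eq_inverse {T U : Type} {F : T -> U} {G : U -> T}
    {P : set T} {Q V : set U} :
  Q `<=` V -> (forall q, V q -> F (G q) = q) ->
  F @` P `<=` Q -> G @` Q `<=` P -> F @` P = Q.
Proof.
move=> QV FG FPQ GQP; apply/seteqP; split => // q Qq.
by exists (G q); [apply: GQP; exists q | exact/FG/QV].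
Qed.

Section IspaceHomeo.
Context {R : realType} {X Y : metricType R} {A : set X} {B : set Y}.
Context {dA : nat -> X} {dB : nat -> Y} {f : X * R -> Y * R} {G : Y * R -> X * R}.
Local Notation SA := (Ispace (R:=R) dA).
Local Notation SB := (Ispace (R:=R) dB).
Hypotheses (isoA : isolated [set: X] `<=` A) (admA : admissible_enum A dA).
Hypotheses (cf : {within SA, continuous f}) (fS : f @` SA `<=` SB).
Hypothesis Gf : forall p, SA p -> G (f p) = p.

Lemma Ispace_homeo_level0 : f @` [set p | p.2 = 0] `<=` [set q | q.2 = 0].
Proof.
move=> _ [p p0 <-]; apply: (limit_point_Ispace (d := dB)).
apply: (within_continuous_limit_point cf fS Gf (p := p)); first by left.
exact: limit_point_Ispace0 admA isoA _ p0.
Qed.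

Hypotheses (clB : closed B) (admB : admissible_enum B dB).
Hypothesis G_level0 : G @` [set q | q.2 = 0] `<=` [set p | p.2 = 0].

Lemma Ispace_homeo_Ipoints :
  f @` range (Ipoint dA) `<=` range (Ipoint (R:=R) dB).
Proof.
move=> _ [_ [n _ <-] <-]; have Sn : SA (Ipoint dA n) by right; exists n.
have /Ispace_cases[fn0|[m ->]] : SB (f (Ipoint dA n)).
  by apply: fS; exists (Ipoint dA n).
  have : (G (f (Ipoint dA n))).2 = 0 by apply: G_level0; exists (f (Ipoint dA n)).
  by rewrite Gf //= => /eqP; rewrite gt_eqF ?invS_gt0.
by exists m.
Qed.

Lemma Ispace_homeo_base : f @` (A `*` [set 0]) `<=` B `*` [set 0].
Proof.
move=> _ [[a _] [/= Aa ->] <-].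
have S0 : SA (a, 0) by left.
have f0 : (f (a, 0)).2 = 0 by apply: Ispace_homeo_level0; exists (a, 0).
have cl : closure (range (Ipoint dB)) (f (a, 0)).
  apply: closureS Ispace_homeo_Ipoints _ _.
  apply: (within_continuous_closure cf _ S0 (base_in_closure_Ipoints admA Aa)).
  by move=> _ [n _ <-]; right; exists n.
case: (f (a, 0)) f0 cl => b r /= -> cl; split => //.
by apply: (closure_Ipoints_in_base admB clB).
Qed.

End IspaceHomeo.

Theorem proposition2 (R : realType) (X Y : metricType R)
  (A : set X) (B : set Y) (dA : nat -> X) (dB : nat -> Y) :
  compact [set: X] -> compact [set: Y] ->
  closed A -> closed B ->
  isolated [set: X] `<=` A -> isolated [set: Y] `<=` B ->
  admissible_enum A dA -> admissible_enum B dB ->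
  (forall g : X -> Y, homeomorphism g -> g @` A = B ->
     exists F : X * R -> Y * R,
       homeo_on (Ispace (R:=R) dA) (Ispace (R:=R) dB) F /\
       forall x : X, F (x, 0) = (g x, 0))
  /\
  (forall f : X * R -> Y * R,
     homeo_on (Ispace (R:=R) dA) (Ispace (R:=R) dB) f ->
     f @` [set p : X * R | p.2 = 0] = [set q : Y * R | q.2 = 0] /\
     f @` (A `*` [set 0]) = B `*` [set 0]).
Proof.
move=> _ _ clA clB isoA isoB admA admB; split.
- move=> g [cg [h [ch gK hK]]] gA.
  have [sigma [tau [sK tK g_sigma h_tau]]] :=
    tracking_bijection cg ch gK hK gA admA admB.
  exists (Ispace_map dB g sigma); split; last by move=> x; rewrite Ispace_map0.
  exact: Ispace_map_homeo_on cg ch gK hK sK tK g_sigma h_tau.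
- move=> f [G [cf cG fS GS [Gf fG]]].
  have f_level0 := Ispace_homeo_level0 isoA admA cf fS Gf.
  have G_level0 := Ispace_homeo_level0 isoB admB cG GS fG.
  split; apply: (image_eq_inverse _ fG).
  + by move=> q q0; left.
  + exact: f_level0.
  + exact: G_level0.
  + by move=> q [_ q0]; left.
  + exact: Ispace_homeo_base isoA admA cf fS Gf clB admB G_level0.
  + exact: Ispace_homeo_base isoB admB cG GS fG clA admA f_level0.
Qed.
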